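(* For every $J\subseteq[n]$, the arrangement $\widetilde{\mathcal B_J}$ is free with exponents $(b_{J,1},\dots,b_{J,n})$, where $b_{J,i}=2\,|\{1,\dots,i-1\}\setminus J|+1$.
   Context: $H_\alpha$ is the zero set in $\mathbb C^n$ of a nonzero linear form $\alpha$. $\operatorname{Der}(\mathbb C[\mathbf x_n])=\bigoplus_i\mathbb C[\mathbf x_n]\partial_i$; a derivation $\sum_if_i\partial_i$ is homogeneous of degree $d$ if all $f_i$ are homogeneous of degree $d$. For an arrangement $\mathcal A$, $\operatorname{Der}(\mathcal A)=\{\delta:\alpha\mid\delta(\alpha)\ \forall H_\alpha\in\mathcal A\}$; $\mathcal A$ is free with exponents $(e_1,\dots,e_n)$ if $\operatorname{Der}(\mathcal A)$ has a $\mathbb C[\mathbf x_n]$-basis of homogeneous derivations of degrees $e_1,\dots,e_n$. For $J\subseteq[n]$, $\widetilde{\mathcal B_J}$ is the arrangement consisting of $H_{x_j}$ for all $1\le j\le n$ together with $H_{x_j-x_i}$ and $H_{x_j+x_i}$ for all $j\in[n]\setminus J$ and $j<i\le n$. *)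

From HB Require Import structures.
From mathcomp Require Import all_boot all_order all_algebra.
From mathcomp Require Import reals.
From mathcomp Require Import complex.
From mathcomp Require Import mpoly.
Set Implicit Arguments. Unset Strict Implicit. Unset Printing Implicit Defensive.
Import Order.TTheory GRing.Theory Num.Theory.
Local Open Scope ring_scope.

Section Arr.
Context {F : fieldType} {n : nat}.

(* polynomial ring F[x_1..x_n] is {mpoly F[n]}; variable x_{i+1} is 'X_i *)

(* A derivation sum_i f_i d_i is represented by its coefficient vector (f_i). *)
Definition derivation := {ffun 'I_n -> {mpoly F[n]}}.

Definition der_apply (delta : derivation) (p : {mpoly F[n]}) : {mpoly F[n]} :=
  \sum_(i < n) delta i * mderiv i p.

Definition der_homog (d : nat) (delta : derivation) : Prop :=
  forall i, delta i \is d.-homog.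

Definition mdvd (a b : {mpoly F[n]}) : Prop := exists q, b = q * a.

Definition is_linear_form (alpha : {mpoly F[n]}) : Prop :=
  exists a : 'I_n -> F, (exists i, a i != 0) /\ alpha = \sum_(i < n) a i *: 'X_i.

(* An arrangement is given by the collection of defining linear forms
   (a predicate on linear forms);  Der(A) = {delta : alpha | delta(alpha)}. *)
Definition in_Der (A : {mpoly F[n]} -> Prop) (delta : derivation) : Prop :=
  forall alpha, A alpha -> mdvd alpha (der_apply delta alpha).

Definition der_comb (g : 'I_n -> {mpoly F[n]}) (theta : 'I_n -> derivation)
  : derivation := [ffun i => \sum_(k < n) g k * theta k i].

Definition free_with_exponents (A : {mpoly F[n]} -> Prop) (e : 'I_n -> nat)
  : Prop :=
  exists theta : 'I_n -> derivation,
    [/\ forall k, der_homog (e k) (theta k),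
        forall k, in_Der A (theta k),
        forall delta, in_Der A delta ->
          exists g : 'I_n -> {mpoly F[n]}, delta = der_comb g theta
      & forall g : 'I_n -> {mpoly F[n]},
          der_comb g theta = 0 -> forall k, g k = 0].

(* The arrangement tilde B_J (indices shifted to 0..n-1). *)
Definition tildeB (J : {set 'I_n}) (alpha : {mpoly F[n]}) : Prop :=
  (exists j : 'I_n, alpha = 'X_j) \/
  (exists j i : 'I_n, [/\ j \notin J, (j < i)%N &
        (alpha = 'X_j - 'X_i \/ alpha = 'X_j + 'X_i)]).

(* b_{J,k+1} = 2 |{1..k} \ J| + 1, in 0-based indexing *)
Definition expB (J : {set 'I_n}) (k : 'I_n) : nat :=
  (2 * #|[set m : 'I_n | (m < k)%N & m \notin J]| + 1)%N.

End Arr.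

(* theta_k = sum_(i >= k) P_k(x_i) d_i, with P_k(t) = t * prod_(m < k, m \notin J) (t^2 - x_m^2),
   lies in Der(tildeB_J): for j \notin J its j-th coefficient is P_k(x_j) (both vanish if j < k),
   and since P_k is odd, x_j - x_i and x_j + x_i divide P_k(x_j) - P_k(x_i) and P_k(x_j) + P_k(x_i).
   The family is triangular with nonzero diagonal P_k(x_k), hence independent. It spans: if
   delta in Der(tildeB_J) vanishes below k, the hyperplanes x_k and x_k +- x_m (m < k, m \notin J)
   force the distinct linear factors x_k, x_k +- x_m of P_k(x_k) to divide delta_k, so subtracting
   a multiple of theta_k kills one more coordinate. *)

Set Warnings "-notation-overridden,-ambiguous-paths,-notation-incompatible-prefix".
From mathcomp Require Import all_boot all_algebra.
From mathcomp Require Import reals.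
From mathcomp Require Import complex.
From mathcomp Require Import mpoly.
From mathcomp Require Import ring.
Set Implicit Arguments. Unset Strict Implicit. Unset Printing Implicit Defensive.
Import GRing.Theory Num.Theory.
Local Open Scope ring_scope.

Section Polynomials.
Variables (F : fieldType) (n : nat).
Local Notation MP := {mpoly F[n]}.
Implicit Types (p q a b c d : MP).

Lemma mdvd0 a : mdvd a 0.
Proof. by exists 0; rewrite mul0r. Qed.

Lemma mdvdD a p q : mdvd a p -> mdvd a q -> mdvd a (p + q).
Proof. by move=> [x ->] [y ->]; exists (x + y); rewrite mulrDl. Qed.

Lemma mdvdB a p q : mdvd a p -> mdvd a q -> mdvd a (p - q).
Proof. by move=> [x ->] [y ->]; exists (x - y); rewrite mulrBl. Qed.

Lemma mdvdMl a p q : mdvd a p -> mdvd a (q * p).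
Proof. by move=> [x ->]; exists (q * x); rewrite mulrA. Qed.

Lemma mdvd_hornerB (r : {poly MP}) a b : mdvd (a - b) (r.[a] - r.[b]).
Proof.
have /factor_theorem [s Ds] : root (r - r.[b]%:P) b by rewrite rootE !hornerE subrr.
have -> : r.[a] - r.[b] = (r - r.[b]%:P).[a] by rewrite !hornerE.
by exists s.[a]; rewrite Ds hornerM hornerXsubC.
Qed.

Lemma mpolyXU_neq0 (i : 'I_n) : ('X_i : MP) != 0.
Proof.
apply/eqP => /(congr1 (mcoeff U_(i))).
by rewrite mcoeffXU mcoeff0 eqxx; apply/eqP; rewrite oner_eq0.
Qed.

Lemma mpolyXU_inj : injective (fun i : 'I_n => 'X_i : MP).
Proof.
move=> i j /(congr1 (mcoeff U_(i))); rewrite !mcoeffXU eqxx.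
by case: eqP => // _ /eqP; rewrite oner_eq0.
Qed.

Lemma mpolyXU_neqN : (2 : F) != 0 -> forall i j : 'I_n, ('X_i : MP) != - 'X_j.
Proof.
move=> h2 i j; apply/eqP => /(congr1 (mcoeff U_(i))).
rewrite mcoeffN !mcoeffXU eqxx; case: eqP => _ /eqP; last by rewrite oppr0 oner_eq0.
by rewrite -subr_eq0 opprK (negbTE h2).
Qed.

Definition msubst_tuple (k : 'I_n) c : n.-tuple MP :=
  [tuple if i == k then c else 'X_i | i < n].
Local Notation msubst k c := (comp_mpoly (msubst_tuple k c)).

Lemma msubstXU k c (i : 'I_n) : msubst k c 'X_i = if i == k then c else 'X_i.
Proof. by rewrite comp_mpolyXU -tnth_nth tnth_mktuple. Qed.

Definition free_of_var k c := forall d, msubst k d c = c.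

Lemma free_of_var0 k : free_of_var k 0.
Proof. by move=> d; rewrite rmorph0. Qed.

Lemma free_of_varN k c : free_of_var k c -> free_of_var k (- c).
Proof. by move=> hc d; rewrite comp_mpolyN hc. Qed.

Lemma free_of_varXU k (i : 'I_n) : i != k -> free_of_var k 'X_i.
Proof. by move=> /negbTE ik d; rewrite msubstXU ik. Qed.

Lemma XsubC_neq0 k c : free_of_var k c -> 'X_k - c != 0.
Proof.
move=> hc; rewrite subr_eq0; apply/eqP => hk.
have := hc ('X_k + 1); rewrite -hk msubstXU eqxx => /eqP.
by rewrite -subr_eq0 addrAC subrr add0r oner_eq0.
Qed.

Section FactorTheorem.
Variables (k : 'I_n) (c : MP).
Hypothesis msubst_c : msubst k c c = c.

(* The polynomials [p] with [X_k - c | p - p(X_k := c)] form a subring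
   containing every variable. *)
Lemma mdvd_sub_msubst p : mdvd ('X_k - c) (p - msubst k c p).
Proof.
pose D p := mdvd ('X_k - c) (p - msubst k c p).
have D1 : D 1 by rewrite /D rmorph1 subrr; apply: mdvd0.
have DM p1 q1 : D p1 -> D q1 -> D (p1 * q1).
  rewrite /D; have -> : p1 * q1 - msubst k c (p1 * q1) =
      q1 * (p1 - msubst k c p1) + msubst k c p1 * (q1 - msubst k c q1).
    by rewrite rmorphM; ring.
  by move=> Dp Dq; apply: mdvdD; apply: mdvdMl.
have DX i : D 'X_i.
  rewrite /D msubstXU; case: eqP => [->|_]; last by rewrite subrr; apply: mdvd0.
  by exists 1; rewrite mul1r.
elim/mpolyind: p => [|x m p _ _ Dp]; first by rewrite /D rmorph0 subrr; apply: mdvd0.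
have Dm : D 'X_[m].
  rewrite mpolyXE_id; apply: (big_ind D) => // i _.
  by elim: (m i) => [|e IH]; rewrite ?expr0 // exprS; apply: DM.
rewrite /D; have -> : x *: 'X_[m] + p - msubst k c (x *: 'X_[m] + p) =
    x%:MP * ('X_[m] - msubst k c 'X_[m]) + (p - msubst k c p).
  by rewrite comp_mpolyD comp_mpolyZ -!mul_mpolyC; ring.
by apply: mdvdD => //; apply: mdvdMl.
Qed.

Lemma mdvd_XsubP p : msubst k c p = 0 <-> mdvd ('X_k - c) p.
Proof.
split=> [p0 | [q ->]]; last by rewrite rmorphM rmorphB /= msubstXU eqxx msubst_c subrr mulr0.
by have := mdvd_sub_msubst p; rewrite p0 subr0.
Qed.

Lemma mdvd_mulXsub d p :
  mdvd d p -> mdvd ('X_k - c) p -> msubst k c d != 0 -> mdvd (('X_k - c) * d) p.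
Proof.
move=> [q Dp] /mdvd_XsubP + nz; rewrite Dp rmorphM => /eqP.
rewrite mulf_eq0 (negbTE nz) orbF => /eqP /mdvd_XsubP [r ->].
by exists r; rewrite mulrA.
Qed.
End FactorTheorem.

Lemma mdvd_prod_XsubC k (s : seq MP) p :
  uniq s -> {in s, forall c, free_of_var k c} ->
  {in s, forall c, mdvd ('X_k - c) p} -> mdvd (\prod_(c <- s) ('X_k - c)) p.
Proof.
elim: s => [|c s IH] /=; first by exists p; rewrite big_nil mulr1.
move=> /andP [cs us] c_free c_dvd; rewrite big_cons.
have s_free : {in s, forall c, free_of_var k c}.
  by move=> c' c's; apply: c_free; rewrite inE c's orbT.
apply: mdvd_mulXsub; first exact: (c_free c (mem_head _ _) c).
- by apply: IH => // c' c's; apply: c_dvd; rewrite inE c's orbT.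
- exact: c_dvd (mem_head _ _).
rewrite rmorph_prod prodf_seq_neq0; apply/allP => c' c's /=.
rewrite rmorphB /= msubstXU eqxx s_free // subr_eq0.
by apply: contraNneq cs => ->.
Qed.

Lemma dhomog_prod_set (A : {set 'I_n}) (G : 'I_n -> MP) e :
  (forall i, G i \is e.-homog) -> \prod_(i in A) G i \is (e * #|A|).-homog.
Proof.
move=> hG; rewrite -big_enum cardE; elim: (enum A) => [|i s IH] /=.
  by rewrite big_nil muln0 dhomog1.
by rewrite big_cons mulnS; apply: dhomogM.
Qed.
End Polynomials.

Section Derivations.
Variables (F : fieldType) (n : nat).
Local Notation MP := {mpoly F[n]}.
Local Notation derivation := (@derivation F n).
Implicit Types (p q : MP) (dl : derivation).

Lemma der_applyXU dl (j : 'I_n) : der_apply dl 'X_j = dl j.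
Proof.
rewrite /der_apply (bigD1 j) //= big1 => [|i /negbTE ij].
  by rewrite mderivX mnm1E eqxx -{1}[U_(j)%MM]add0m addmK mpolyX0 scale1r mulr1 addr0.
by rewrite mderivX mnm1E eq_sym ij scale0r mulr0.
Qed.

Lemma der_applyD dl p q : der_apply dl (p + q) = der_apply dl p + der_apply dl q.
Proof. by rewrite /der_apply -big_split; apply: eq_bigr => i _; rewrite mderivD mulrDr. Qed.

Lemma der_applyB dl p q : der_apply dl (p - q) = der_apply dl p - der_apply dl q.
Proof. by rewrite /der_apply -sumrB; apply: eq_bigr => i _; rewrite mderivB mulrBr. Qed.

Lemma in_Der_subMr (A : MP -> Prop) dl1 dl2 h :
  in_Der A dl1 -> in_Der A dl2 -> in_Der A [ffun i => dl1 i - h * dl2 i].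
Proof.
move=> D1 D2 alpha A_alpha.
have -> : der_apply [ffun i => dl1 i - h * dl2 i] alpha =
    der_apply dl1 alpha - h * der_apply dl2 alpha.
  rewrite /der_apply mulr_sumr -sumrB; apply: eq_bigr => i _.
  by rewrite ffunE mulrBl mulrA.
by apply: mdvdB; [apply: D1 | apply/mdvdMl/D2].
Qed.

Section TriangularBasis.
Variables (A : MP -> Prop) (theta : 'I_n -> derivation).
Hypothesis theta_lower0 : forall k i : 'I_n, (i < k)%N -> theta k i = 0.

Lemma triangular_der_comb_eq0 :
  (forall k, theta k k != 0) ->
  forall g, der_comb g theta = 0 -> forall k, g k = 0.
Proof.
move=> diag_neq0 g comb0.
suff g0 r (k : 'I_n) : (k < r)%N -> g k = 0 by move=> k; apply: (g0 k.+1).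
elim: r k => [//|r IH] k; rewrite ltnS leq_eqVlt => /predU1P [kr|]; last exact: IH.
have /eqP := congr1 (fun dl : derivation => dl k) comb0.
rewrite !ffunE (bigD1 k) //= big1 ?addr0 => [|j jk].
  by rewrite mulf_eq0 (negbTE (diag_neq0 k)) orbF => /eqP.
have [kj|jk'] := ltnP k j; first by rewrite theta_lower0 ?mulr0.
by rewrite IH ?mul0r // -kr ltn_neqAle jk' andbT.
Qed.

Lemma triangular_spanning :
  (forall k, in_Der A (theta k)) ->
  (forall dl (k : 'I_n), in_Der A dl -> (forall i : 'I_n, (i < k)%N -> dl i = 0) ->
     mdvd (theta k k) (dl k)) ->
  forall dl, in_Der A dl -> exists g, dl = der_comb g theta.
Proof.
move=> theta_Der diag_dvd.
suff span r k dl : (n - k = r)%N -> in_Der A dl ->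
    (forall i : 'I_n, (i < k)%N -> dl i = 0) -> exists g, dl = der_comb g theta.
  by move=> dl Ddl; apply: (span n 0%N) => //; rewrite subn0.
elim: r k dl => [|r IH] k dl nk Ddl dl0.
  exists (fun=> 0); apply/ffunP => i; rewrite dl0; last first.
    by rewrite (leq_trans (ltn_ord i)) // -subn_eq0 nk.
  by rewrite !ffunE big1 // => j _; rewrite mul0r.
have kn : (k < n)%N by rewrite -subn_gt0 nk.
pose K := Ordinal kn.
have [h Dk] := diag_dvd dl K Ddl dl0.
pose dl' := [ffun i => dl i - h * theta K i].
have [g' Ddl'] : exists g, dl' = der_comb g theta.
  apply: (IH k.+1); first by rewrite subnS nk.
    exact: in_Der_subMr.
  move=> i; rewrite ltnS leq_eqVlt ffunE => /predU1P [ik|ik].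
    by rewrite (_ : i = K) ?Dk ?subrr //; apply: val_inj.
  by rewrite dl0 // theta_lower0 // mulr0 subrr.
exists (fun j => g' j + (j == K)%:R * h); apply/ffunP => i.
have -> : dl i = dl' i + h * theta K i by rewrite ffunE subrK.
rewrite Ddl' !ffunE (eq_bigr _ (fun j _ => mulrDl _ _ _)) big_split /=.
congr (_ + _); rewrite (bigD1 K) //= eqxx mul1r big1 ?addr0 // => j /negbTE ->.
by rewrite !mul0r.
Qed.

End TriangularBasis.
End Derivations.

Section ArrangementB.
Variables (F : fieldType) (n : nat) (J : {set 'I_n}).
Local Notation MP := {mpoly F[n]}.
Local Notation derivation := (@derivation F n).
Implicit Types (k : 'I_n) (t : MP).

Lemma tildeB_X (j : 'I_n) : tildeB J ('X_j : MP).
Proof. by left; exists j. Qed.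

Lemma tildeB_XB (j i : 'I_n) : j \notin J -> (j < i)%N -> tildeB J ('X_j - 'X_i : MP).
Proof. by move=> jJ ji; right; exists j, i; split=> //; left. Qed.

Lemma tildeB_XD (j i : 'I_n) : j \notin J -> (j < i)%N -> tildeB J ('X_j + 'X_i : MP).
Proof. by move=> jJ ji; right; exists j, i; split=> //; right. Qed.

Definition notJ_below (k : 'I_n) : {set 'I_n} := [set m : 'I_n | (m < k)%N & m \notin J].

Definition Bpoly k : {poly MP} := 'X * \prod_(m in notJ_below k) ('X ^+ 2 - ('X_m ^+ 2)%:P).

Definition thetaB k : derivation :=
  [ffun i : 'I_n => if (k <= i)%N then (Bpoly k).['X_i] else 0].

Definition Broots k : seq MP :=
  0 :: [seq 'X_m | m <- enum (notJ_below k)] ++ [seq - 'X_m | m <- enum (notJ_below k)].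

Lemma horner_Bpoly k t :
  (Bpoly k).[t] = t * \prod_(m in notJ_below k) (t ^+ 2 - 'X_m ^+ 2).
Proof. by rewrite hornerM hornerX horner_prod; under eq_bigr do rewrite !hornerE. Qed.

Lemma horner_BpolyN k t : (Bpoly k).[- t] = - (Bpoly k).[t].
Proof. by rewrite !horner_Bpoly sqrrN mulNr. Qed.

Lemma thetaB_lower0 k (i : 'I_n) : (i < k)%N -> thetaB k i = 0.
Proof. by move=> ik; rewrite ffunE leqNgt ik. Qed.

Lemma thetaB_notin k (j : 'I_n) : j \notin J -> thetaB k j = (Bpoly k).['X_j].
Proof.
move=> jJ; rewrite ffunE; case: leqP => // jk.
by rewrite horner_Bpoly (bigD1 j) ?inE ?jk //= subrr mul0r mulr0.
Qed.

Lemma thetaB_Der k : in_Der (tildeB J) (thetaB k).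
Proof.
move=> alpha [[j ->]|[j [i [jJ ji Dalpha]]]].
  rewrite der_applyXU ffunE; case: ifP => _; last exact: mdvd0.
  rewrite horner_Bpoly; exists (\prod_(m in notJ_below k) ('X_j ^+ 2 - 'X_m ^+ 2)).
  by rewrite mulrC.
have [ik|ki] := ltnP i k.
  rewrite (_ : der_apply _ _ = 0); first exact: mdvd0.
  have [thetaB_j thetaB_i] := (thetaB_lower0 (ltn_trans ji ik), thetaB_lower0 ik).
  by case: Dalpha => ->; rewrite ?der_applyB ?der_applyD !der_applyXU thetaB_j thetaB_i
    ?subrr ?addr0.
have thetaB_i : thetaB k i = (Bpoly k).['X_i] by rewrite ffunE ki.
case: Dalpha => ->; rewrite ?der_applyB ?der_applyD !der_applyXU thetaB_notin // thetaB_i.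
  exact: mdvd_hornerB.
by have := mdvd_hornerB (Bpoly k) 'X_j (- 'X_i); rewrite horner_BpolyN !opprK.
Qed.

Lemma thetaB_homog k : der_homog (expB J k) (thetaB k).
Proof.
have X_homog (i : 'I_n) : ('X_i : MP) \is 1.-homog by rewrite dhomogX; apply/eqP/mdeg1.
move=> i; rewrite ffunE; case: ifP => _; last exact: dhomog0.
rewrite horner_Bpoly /expB addnC; apply: dhomogM => //.
by apply: dhomog_prod_set => m; apply: rpredB; apply: (dhomogMn 2 (X_homog _)).
Qed.

Lemma thetaB_diag k : thetaB k k = \prod_(c <- Broots k) ('X_k - c).
Proof.
rewrite ffunE leqnn horner_Bpoly big_cons subr0 big_cat !big_map !big_enum /=.
by congr (_ * _); rewrite -big_split; apply: eq_bigr => m _; rewrite opprK subr_sqr.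
Qed.

Lemma Broots_free k : {in Broots k, forall c, free_of_var k c}.
Proof.
move=> c; rewrite inE mem_cat => /or3P [/eqP ->|/mapP [m Sm ->]|/mapP [m Sm ->]];
  first exact: free_of_var0;
  have mk : m != k by move: Sm; rewrite mem_enum inE neq_ltn => /andP [-> _].
- exact: free_of_varXU.
- exact/free_of_varN/free_of_varXU.
Qed.

Lemma thetaB_diag_neq0 k : thetaB k k != 0.
Proof.
rewrite thetaB_diag prodf_seq_neq0; apply/allP => c cB /=.
exact/XsubC_neq0/Broots_free.
Qed.

Hypothesis two_neq0 : (2 : F) != 0.

Lemma Broots_uniq k : uniq (Broots k).
Proof.
have NX_inj : injective (fun i : 'I_n => - 'X_i : MP).
  by move=> i j /= /(congr1 -%R); rewrite !opprK; apply: mpolyXU_inj.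
rewrite /= mem_cat negb_or cat_uniq (map_inj_uniq (@mpolyXU_inj F n)) (map_inj_uniq NX_inj).
rewrite enum_uniq andbT; apply/and3P; split=> //; first (apply/andP; split).
- by apply/mapP => -[m _ /esym/eqP]; apply/negP; apply: mpolyXU_neq0.
- by apply/mapP => -[m _ /esym/eqP]; rewrite oppr_eq0; apply/negP; apply: mpolyXU_neq0.
apply/hasPn => _ /mapP [j _ ->]; apply/mapP => -[i _ /eqP].
by rewrite eq_sym; apply/negP; apply: mpolyXU_neqN.
Qed.

Lemma thetaB_diag_dvd (dl : derivation) k :
  in_Der (tildeB J) dl -> (forall i : 'I_n, (i < k)%N -> dl i = 0) ->
  mdvd (thetaB k k) (dl k).
Proof.
move=> Ddl dl0; rewrite thetaB_diag.
apply: mdvd_prod_XsubC; [exact: Broots_uniq | exact: Broots_free |].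
move=> c; rewrite inE mem_cat => /or3P [/eqP ->|/mapP [m Sm ->]|/mapP [m Sm ->]].
- by rewrite subr0; have := Ddl _ (tildeB_X k); rewrite der_applyXU.
- move: Sm; rewrite mem_enum inE => /andP [mk mJ].
  have [q Dq] := Ddl _ (tildeB_XB mJ mk); rewrite der_applyB !der_applyXU dl0 // in Dq.
  by exists q; rewrite -opprB mulrN -Dq sub0r opprK.
- move: Sm; rewrite mem_enum inE => /andP [mk mJ].
  have [q Dq] := Ddl _ (tildeB_XD mJ mk); rewrite der_applyD !der_applyXU dl0 // in Dq.
  by exists q; rewrite opprK addrC -Dq add0r.
Qed.

Theorem tildeB_free : @free_with_exponents F n (tildeB J) (expB J).
Proof.
exists thetaB; split; [exact: thetaB_homog | exact: thetaB_Der | |].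
- apply: triangular_spanning; [exact: thetaB_lower0 | exact: thetaB_Der |].
  by move=> dl k; apply: thetaB_diag_dvd.
- by apply: triangular_der_comb_eq0; [exact: thetaB_lower0 | exact: thetaB_diag_neq0].
Qed.
End ArrangementB.

Theorem mainTheorem17 (R : realType) (n : nat) (J : {set 'I_n}) :
  @free_with_exponents R[i] n (tildeB J) (expB J).
Proof. by apply: tildeB_free; rewrite pnatr_eq0. Qed.
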